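(* Let $F$ be an absolutely continuous c.d.f. with density $f$ satisfying condition set 1 (defined in the context). Let $i=i(n)$ satisfy $i\to\infty$ and $i/n\to0$ as $n\to\infty$, and define $a_n=F^{-1}\!\left(1-\frac{i}{n}\right)$ and $b_n=\frac{\sqrt{i}}{n f(a_n)}$. Then $\lim_{n\to\infty}\frac{a_n}{b_n}=\infty$.
   Context: Condition set 1: with hazard rate $h(x)\triangleq f(x)/(1-F(x))$, (i) $F^{-1}(1)=\infty$ (the distribution has unbounded support), and (ii) either $\lim_{x\to\infty} x h(x)=c_0$ for some constant $c_0>0$, or $\lim_{x\to\infty}\frac{d}{dx}\frac{1}{h(x)}=0$. *)

From HB Require Import structures.
From mathcomp Require Import all_boot all_order all_algebra.
From mathcomp Require Import all_classical all_reals all_analysis.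
Set Implicit Arguments. Unset Strict Implicit. Unset Printing Implicit Defensive.
Import Order.TTheory GRing.Theory Num.Theory.
Import numFieldNormedType.Exports.
Local Open Scope classical_set_scope.
Local Open Scope ring_scope.

Definition is_cdf {R : realType} (F : R -> R) : Prop :=
  {homo F : x y / x <= y} /\
  (forall x : R, F y @[y --> x^'+] --> F x) /\
  (F x @[x --> -oo] --> (0:R)) /\
  (F x @[x --> +oo] --> (1:R)).

Definition density_of {R : realType} (F f : R -> R) : Prop :=
  measurable_fun setT f /\ (forall x, 0 <= f x) /\
  forall x : R,
    ((F x)%:E = \int[lebesgue_measure]_(t in `]-oo, x]) (f t)%:E)%E.

Definition hazard {R : realType} (F f : R -> R) (x : R) : R := f x / (1 - F x).

Definition quantile {R : realType} (F : R -> R) (p : R) : R :=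
  inf [set x : R | p <= F x].

Definition condition_set_1 {R : realType} (F f : R -> R) : Prop :=
  (* (i) F^{-1}(1) = oo, i.e. { x | F x >= 1 } is empty *)
  (forall x : R, F x < 1) /\
  ((exists c0 : R, 0 < c0 /\ (x * hazard F f x) @[x --> +oo] --> c0) \/
   ((\forall x \near +oo,
        0 < hazard F f x /\ derivable (fun y => (hazard F f y)^-1) x 1) /\
    (derive1 (fun y => (hazard F f y)^-1) x) @[x --> +oo] --> (0:R))).

(* Condition set 1 forces x h(x) >= c > 0 for large x: directly in the first
   alternative, and in the second because (1/h)' -> 0 makes 1/h sublinear,
   i.e. 1/h(x) <= x.  Since F has a density it is continuous, so
   F(a_n) <= 1 - i/n, while a_n -> oo because F < 1.  Writing
   f = h (1 - F) gives
     a_n / b_n = a_n h(a_n) * n (1 - F(a_n)) / sqrt i >= c sqrt i -> oo. *)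
From HB Require Import structures.
From mathcomp Require Import all_boot all_order all_algebra.
From mathcomp Require Import all_classical all_reals all_analysis.
From mathcomp Require Import ring lra.
From mathcomp Require Import measurable_realfun.
Import Order.TTheory GRing.Theory Num.Theory.
Import numFieldNormedType.Exports.
Local Open Scope classical_set_scope.
Local Open Scope ring_scope.

Section DensityCdf.
Context {R : realType} {F f : R -> R}.
Hypothesis dens : density_of F f.

Lemma density_cdfB (x a : R) : x <= a ->
  ((F a - F x)%:E = \int[lebesgue_measure]_(t in `]x, a]) (f t)%:E)%E.
Proof.
move: dens => [mf [f0 hF]] xa.
have mfE : measurable_fun setT (EFin \o f) by apply/measurable_EFinP.
have Fa : (F a)%:E = ((F x)%:E + \int[lebesgue_measure]_(t in `]x, a]) (f t)%:E)%E.
  rewrite !hF -ge0_integral_setU //=.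
  - by rewrite -itv_bndbnd_setU// bnd_simp.
  - exact: measurable_funS mfE.
  - by move=> y _; rewrite lee_fin.
  - apply/disj_set2P; rewrite -subset0 => z/=; rewrite !in_itv/= => -[zx /andP[xz _]].
    by move: (lt_le_trans xz zx); rewrite ltxx.
by rewrite EFinB Fa addeAC subee ?add0e.
Qed.

Lemma density_cdf_le_left (a q : R) : (forall x, x < a -> F x < q) -> F a <= q.
Proof.
move: dens => [mf [f0 hF]] Fq.
have mfE : measurable_fun setT (EFin \o f) by apply/measurable_EFinP.
have intf : (@lebesgue_measure R).-integrable setT (EFin \o (f \_ `]-oo, a])).
  rewrite -restrict_EFin; apply/integrable_restrict => //=; rewrite setTI.
  apply/integrableP; split; first exact: measurable_funS mfE.
  rewrite (_ : (fun x => _) = (fun x => (f x)%:E)); last first.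
    by apply/funext => x /=; rewrite ger0_norm.
  by rewrite -hF ltry.
apply/ler_addgt0Pr => e e0.
have [d [d0 small]] := integral_normr_continuous intf e0.
set x := a - d / 2.
have xa : x < a by rewrite /x ltrBlDr ltrDl divr_gt0.
have ax_small : (@lebesgue_measure R `]x, a] < d%:E)%E.
  by rewrite lebesgue_measure_itv/= lte_fin xa -EFinD lte_fin /x; lra.
have := small _ (measurable_itv `]x, a]) ax_small.
rewrite /Rintegral (_ : (\int[_]_(t in _) _)%E = (F a - F x)%:E); last first.
  rewrite density_cdfB ?ltW//; apply: eq_integral => t /[!inE] /= tx.
  rewrite patchE ifT ?ger0_norm//.
  by rewrite inE /=; move: tx; rewrite !in_itv /= => /andP[_ ->].
by move: (Fq x xa) => /= Fxq; lra.
Qed.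

End DensityCdf.

Section Quantile.
Context {R : realType} {F : R -> R}.
Hypothesis cdf : is_cdf F.

Lemma lt_quantile_cdf (q x : R) : 0 < q -> x < quantile F q -> F x < q.
Proof.
move: cdf => [_ [_ [F0 _]]] q0 xq.
have [M [_ FM]] := cvgr_lt _ F0 _ q0.
have lb : has_lbound [set x : R | q <= F x].
  exists (M - 1) => s /= qs; rewrite leNgt; apply/negP => sM.
  have : F s < q by apply: FM; rewrite (lt_trans sM)// ltrBlDr ltrDl.
  by rewrite ltNge qs.
rewrite ltNge; apply/negP => qx.
by move: (ge_inf lb qx); rewrite leNgt xq.
Qed.

Lemma le_quantile_cdf (q y : R) : q < 1 -> F y < q -> y <= quantile F q.
Proof.
move: cdf => [Fmono [_ [_ F1]]] q1 Fy.
have [M [_ FM]] := cvgr_gt _ F1 _ q1.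
have ne : [set x : R | q <= F x] !=set0.
  by exists (M + 1); apply/ltW; apply: FM; rewrite ltrDl.
rewrite leNgt; apply/negP => /(inf_lt ne) [s /= qs sy].
by move: (Fmono _ _ (ltW sy)); rewrite leNgt (lt_le_trans Fy qs).
Qed.

Lemma quantile_cvgy {T : Type} {G : set_system T} {FG : Filter G} (p : T -> R) :
  (forall x, F x < 1) -> (\forall t \near G, 0 < p t) -> p t @[t --> G] --> 0 ->
  quantile F (1 - p t) @[t --> G] --> +oo.
Proof.
move=> F1 p0 p_cvg0; apply/cvgryPge => A.
have FA : 0 < 1 - F A by rewrite subr_gt0.
near=> t; have ? : 0 < p t by near: t.
have ? : p t < 1 - F A by near: t; exact: cvgr_lt _ p_cvg0 _ FA.
by apply: le_quantile_cdf; lra.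
Unshelve. all: by end_near. Qed.

End Quantile.

Lemma density_cdf_quantile_le {R : realType} {F f : R -> R} (q : R) :
  is_cdf F -> density_of F f -> 0 < q -> F (quantile F q) <= q.
Proof.
by move=> cdf dens q0; apply: (density_cdf_le_left dens) => x; exact: lt_quantile_cdf.
Qed.

Lemma derive1_cvg0_le_id {R : realType} {g : R -> R} :
  (\forall x \near +oo, derivable g x 1) -> derive1 g x @[x --> +oo] --> 0 ->
  \forall x \near +oo, g x <= x.
Proof.
move=> gder g'0.
have half_gt0 : (0:R) < 1/2 by rewrite divr_gt0.
have [M [_ gM]] : \forall x \near +oo, derivable g x 1 /\ derive1 g x < 1/2.
  by near=> x; split; near: x; [exact: gder|exact: cvgr_lt _ g'0 _ half_gt0].
set x0 := Num.max M 0 + 1.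
have x0M : M < x0 by rewrite /x0; have := le_max M M 0; rewrite lexx /=; lra.
have x0_ge0 : 0 <= x0 by rewrite /x0; have := le_max 0 M 0; rewrite lexx orbT; lra.
exists (Num.max x0 (2 * g x0)); split; first exact: num_real.
move=> x; rewrite gt_max => /andP[xx0 xg].
have gder' y : x0 <= y -> derivable g y 1.
  by move=> y0; case: (gM y (lt_le_trans x0M y0)).
have g_is_derive y : y \in `]x0, x[ -> is_derive y 1 g (derive1 g y).
  by rewrite in_itv/= => /andP[y1 _]; rewrite derive1E; apply/derivableP/gder'/ltW.
have gcont : {within `[x0, x], continuous g}.
  apply: derivable_within_continuous => y; rewrite in_itv/= => /andP[y1 _].
  exact: gder'.
have [c /[!in_itv]/= /andP[c1 _] MVT] := MVT_segment (ltW xx0) g_is_derive gcont.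
have g'c : derive1 g c < 1/2 by case: (gM c (lt_le_trans x0M c1)).
have : g x - g x0 <= (x - x0) / 2.
  rewrite MVT; have ? : 0 <= x - x0 by rewrite subr_ge0 ltW.
  apply: le_trans (ler_wpM2r _ (ltW g'c)) _ => //; lra.
lra.
Unshelve. all: by end_near. Qed.

Lemma condition_set_1_hazard_lbound {R : realType} {F f : R -> R} :
  condition_set_1 F f ->
  exists2 c : R, 0 < c & \forall x \near +oo, c <= x * hazard F f x.
Proof.
move=> [_ [[c0 [c00 xh_cvg]]|[h_pos_der ginv'0]]].
  exists (c0 / 2); first by rewrite divr_gt0.
  have c0_half : c0 / 2 < c0 by rewrite ltr_pdivrMr// ltr_pMr// ltr1n.
  by near=> x; apply/ltW; near: x; exact: cvgr_gt _ xh_cvg _ c0_half.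
have ginv_der : \forall x \near +oo, derivable (fun y => (hazard F f y)^-1) x 1.
  by apply: filterS h_pos_der => ? [].
have ginv_le := derive1_cvg0_le_id ginv_der ginv'0.
exists 1 => //; near=> x.
have h0 : 0 < hazard F f x by near: x; apply: filterS h_pos_der => ? [].
have : (hazard F f x)^-1 <= x by near: x; exact: ginv_le.
by move=> /(ler_wpM2r (ltW h0)); rewrite mulVf ?lt0r_neq0.
Unshelve. all: by end_near. Qed.

Lemma cvgy_sqrt {R : realType} {T : Type} {G : set_system T} {FG : Filter G}
    [u : T -> R] :
  u t @[t --> G] --> +oo -> Num.sqrt (u t) @[t --> G] --> +oo.
Proof.
move=> /cvgryPge u_cvgy; apply/cvgryPge => A.
near=> t; have Au : A ^+ 2 <= u t by near: t; exact: u_cvgy.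
by rewrite (le_trans (ler_norm A))// -sqrtr_sqr ler_sqrt// (le_trans _ Au)// sqr_ge0.
Unshelve. all: by end_near. Qed.

Lemma gt0_mul_cvgy {R : realFieldType} {T : Type} {G : set_system T} {FG : Filter G}
    [c : R] [u : T -> R] :
  0 < c -> u t @[t --> G] --> +oo -> c * u t @[t --> G] --> +oo.
Proof.
move=> c0 /cvgryPge u_cvgy; apply/cvgryPge => A.
near=> t; have Au : A / c <= u t by near: t; exact: u_cvgy.
by rewrite -ler_pdivrMl// mulrC.
Unshelve. all: by end_near. Qed.

Lemma hazard_ratio_ge {R : realType} (F f : R -> R) (c a s N : R) :
  0 < c -> 0 < s -> F a < 1 -> c <= a * hazard F f a ->
  s * s <= N * (1 - F a) -> c * s <= a / (s / (N * f a)).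
Proof.
move=> c0 s0 Fa1 cah ssN.
have fa : f a = hazard F f a * (1 - F a) by rewrite /hazard divfK// subr_eq0 gt_eqF.
have -> : a / (s / (N * f a)) = (a * hazard F f a) * (N * (1 - F a) / s).
  by rewrite invf_div fa; ring.
have sN : s <= N * (1 - F a) / s by rewrite ler_pdivlMr.
by apply: le_trans (ler_wpM2r (ltW s0) cah) _; apply: ler_wpM2l => //; lra.
Qed.

Theorem lemma2 (R : realType) (F f : R -> R) (i : nat -> nat) :
  is_cdf F -> density_of F f -> condition_set_1 F f ->
  ((i n)%:R : R) @[n --> \oo] --> +oo ->
  ((i n)%:R / n%:R : R) @[n --> \oo] --> (0:R) ->
  let a := fun n : nat => quantile F (1 - (i n)%:R / n%:R) in
  let b := fun n : nat => Num.sqrt ((i n)%:R) / (n%:R * f (a n)) in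
  (a n / b n) @[n --> \oo] --> +oo.
Proof.
move=> cdf dens cs i_cvgy p_cvg0 a b.
have F1 : forall x, F x < 1 by case: cs.
have [c c0 hc] := condition_set_1_hazard_lbound cs.
have i0 : \forall n \near \oo, (0:R) < (i n)%:R by move/cvgryPgt: i_cvgy; apply.
have p0 : \forall n \near \oo, (0:R) < (i n)%:R / n%:R.
  near=> n; apply: divr_gt0; first by near: n.
  by rewrite ltr0n; near: n; exists 1%N.
have a_cvgy : a n @[n --> \oo] --> +oo by exact: quantile_cvgy.
apply: (ger_cvgy _ (gt0_mul_cvgy c0 (cvgy_sqrt i_cvgy))); near=> n.
have ? : (0:R) < (i n)%:R / n%:R by near: n.
have ? : (0:R) < n%:R by rewrite ltr0n; near: n; exists 1%N.
have Fa : F (a n) <= 1 - (i n)%:R / n%:R.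
  apply: (density_cdf_quantile_le _ cdf dens); rewrite subr_gt0.
  by near: n; exact: cvgr_lt _ p_cvg0 _ ltr01.
apply: hazard_ratio_ge => //; first by rewrite sqrtr_gt0; near: n.
  by near: n; exact: a_cvgy _ hc.
rewrite -expr2 sqr_sqrtr// -[X in X <= _](@divfK _ n%:R) ?lt0r_neq0// mulrC.
by apply: ler_wpM2l; [exact: ltW | lra].
Unshelve. all: by end_near. Qed.
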